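(* There exists a family of MDPs $(\mathcal{M}_n)_{n\ge1}$, where $\mathcal{M}_n$ has $2n+1$ states, such that $|V(\mathsf{est}_{\mathsf{MDP}}(\tau))|=2^n$ for every trace $\tau$ with $|\tau|>2$ that is observed with positive probability under some scheduler (i.e., $\Pr^\sigma(\tau)>0$ for some scheduler $\sigma$).
   Context: An MDP is a tuple $\langle S,\iota,\mathsf{Act},P,\mathsf{Z},\mathsf{obs}\rangle$: finite state set $S$, initial distribution $\iota\in\mathsf{Distr}(S)$, finite action set $\mathsf{Act}$, partial transition function $P\colon S\times\mathsf{Act}\rightharpoonup\mathsf{Distr}(S)$ (write $P(s,\alpha,s')=P(s,\alpha)(s')$), finite observation set $\mathsf{Z}$, observation function $\mathsf{obs}\colon S\to\mathsf{Distr}(\mathsf{Z})$; $\mathsf{AvAct}(s)=\{\alpha\mid P(s,\alpha)\text{ defined}\}\neq\emptyset$. A scheduler $\sigma$ maps each finite path $\pi=s_0a_0\dots s_n$ (with $\iota(s_0)>0$, $P(s_i,a_i)(s_{i+1})>0$) to a distribution on $\mathsf{AvAct}(s_n)$, and $\Pr^\sigma(\pi)=\iota(s_0)\prod_{i<n}\sigma(s_0a_0\dots s_i)(a_i)P(s_i,a_i)(s_{i+1})$; for a trace $\tau=z_0\dots z_n$, $|\tau|$ is its length, $\Pr(\tau\mid\pi)=\prod_i\mathsf{obs}(s_i)(z_i)$ if $\pi$ has $n+1$ states and $0$ otherwise, and $\Pr^\sigma(\tau)=\sum_\pi\Pr^\sigma(\pi)\Pr(\tau\mid\pi)$. Beliefs: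 $\mathsf{Bel}=\mathsf{Distr}(S)\cup\{\mathbf{0}\}$ in $\mathbb{R}^S$. $\mathsf{est}_{\mathsf{MDP}}(z)=\{b_z\}$ with $b_z(s)=\iota(s)\mathsf{obs}(s)(z)/\sum_{\hat s}\iota(\hat s)\mathsf{obs}(\hat s)(z)$ (or $\mathbf{0}$ if the denominator is $0$), $\mathsf{est}_{\mathsf{MDP}}(\tau\cdot z)=\bigcup_{\mathsf{bel}\in\mathsf{est}_{\mathsf{MDP}}(\tau)}\mathsf{est}^{\mathsf{up}}(\mathsf{bel},z)$, where $\mathsf{bel}'\in\mathsf{est}^{\mathsf{up}}(\mathsf{bel},z)$ iff there is $\varsigma\colon S\to\mathsf{Distr}(\mathsf{Act})$ with $\varsigma(s)$ supported in $\mathsf{AvAct}(s)$ and $\mathsf{bel}'(s')=\dfrac{\sum_s\mathsf{bel}(s)\sum_\alpha\varsigma(s)(\alpha)P(s,\alpha,s')\mathsf{obs}(s')(z)}{\sum_s\mathsf{bel}(s)\sum_\alpha\varsigma(s)(\alpha)\sum_{\hat s}P(s,\alpha,\hat s)\mathsf{obs}(\hat s)(z)}$ ($0/0=0$). $V(B)$ is the set of elements of $B$ that are not convex combinations of other elements of $B$. *)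

From HB Require Import structures.
From mathcomp Require Import all_boot all_order all_algebra.
From mathcomp Require Import reals.
Set Implicit Arguments. Unset Strict Implicit. Unset Printing Implicit Defensive.
Import Order.TTheory GRing.Theory Num.Theory.
Local Open Scope ring_scope.

Record mdp (R : realType) := Mdp {
  mdp_S : finType;
  mdp_A : finType;
  mdp_Z : finType;
  mdp_iota : {ffun mdp_S -> R};
  mdp_P : mdp_S -> mdp_A -> option {ffun mdp_S -> R};
  mdp_obs : mdp_S -> {ffun mdp_Z -> R} }.

Definition is_distr (R : realType) (T : finType) (d : {ffun T -> R}) : Prop :=
  (forall x, 0 <= d x) /\ \sum_x d x = 1.

(* P(s, a, s'), with value 0 when P(s,a) is undefined (never used then). *)
Definition Ptr (R : realType) (M : mdp R) (s : mdp_S M) (a : mdp_A M) (s' : mdp_S M) : R :=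
  if @mdp_P R M s a is Some d then d s' else 0.

Definition avact (R : realType) (M : mdp R) (s : mdp_S M) (a : mdp_A M) : bool :=
  @mdp_P R M s a != None.

Definition wf_mdp (R : realType) (M : mdp R) : Prop :=
  is_distr (mdp_iota M) /\
  (forall s a d, @mdp_P R M s a = Some d -> is_distr d) /\
  (forall s, is_distr (@mdp_obs R M s)) /\
  (forall s : mdp_S M, exists a, avact s a).

(* A finite path s0 a0 s1 ... an-1 sn is represented as (s0, [:: (a0,s1); ...; (an-1,sn)]). *)
Definition scheduler (R : realType) (M : mdp R) :=
  mdp_S M -> seq (mdp_A M * mdp_S M) -> {ffun mdp_A M -> R}.

Definition is_sched (R : realType) (M : mdp R) (sigma : scheduler M) : Prop :=
  forall s0 p, is_distr (sigma s0 p) /\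
    (forall a, 0 < sigma s0 p a -> avact (last s0 (map snd p)) a).

Definition Pr_path (R : realType) (M : mdp R) (sigma : scheduler M)
    (s0 : mdp_S M) (k : nat) (p : k.-tuple (mdp_A M * mdp_S M)) : R :=
  @mdp_iota R M s0 *
  \prod_(i < k) (sigma s0 (take i p) (tnth p i).1 *
                 Ptr (last s0 (map snd (take i p))) (tnth p i).1 (tnth p i).2).

(* Pr^sigma(tau) = sum_pi Pr^sigma(pi) Pr(tau | pi); only paths with |tau| states contribute. *)
Definition Pr_trace (R : realType) (M : mdp R) (sigma : scheduler M)
    (tau : seq (mdp_Z M)) : R :=
  match tau with
  | [::] => 0
  | z0 :: zs =>
      \sum_(s0 : mdp_S M) \sum_(p : (size zs).-tuple (mdp_A M * mdp_S M))
        Pr_path sigma s0 p *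
        (@mdp_obs R M s0 z0 * \prod_(i < size zs) @mdp_obs R M (tnth p i).2 (nth z0 zs i))
  end.

(* Beliefs are vectors in R^S. In MathComp x / 0 = 0, matching the 0/0 = 0 convention
   (and the "0 if the denominator is 0" case of b_z). *)
Definition est_init (R : realType) (M : mdp R) (z : mdp_Z M) : {ffun mdp_S M -> R} :=
  [ffun s => @mdp_iota R M s * @mdp_obs R M s z /
             \sum_(t : mdp_S M) @mdp_iota R M t * @mdp_obs R M t z].

Definition is_local_sched (R : realType) (M : mdp R)
    (vs : mdp_S M -> {ffun mdp_A M -> R}) : Prop :=
  forall s, is_distr (vs s) /\ (forall a, 0 < vs s a -> avact s a).

Definition est_up (R : realType) (M : mdp R) (bel : {ffun mdp_S M -> R}) (z : mdp_Z M)
    (bel' : {ffun mdp_S M -> R}) : Prop :=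
  exists vs : mdp_S M -> {ffun mdp_A M -> R}, is_local_sched vs /\
    bel' = [ffun s' =>
      (\sum_s bel s * \sum_a vs s a * Ptr s a s' * @mdp_obs R M s' z) /
      (\sum_s bel s * \sum_a vs s a *
           \sum_(sh : mdp_S M) Ptr s a sh * @mdp_obs R M sh z)].

Fixpoint est_aux (R : realType) (M : mdp R) (B : {ffun mdp_S M -> R} -> Prop)
    (tau : seq (mdp_Z M)) : {ffun mdp_S M -> R} -> Prop :=
  match tau with
  | [::] => B
  | z :: t => est_aux (fun b' => exists b, B b /\ est_up b z b') t
  end.

Definition est (R : realType) (M : mdp R) (tau : seq (mdp_Z M)) :
    {ffun mdp_S M -> R} -> Prop :=
  match tau with
  | [::] => fun _ => False
  | z :: t => est_aux (fun b => b = est_init z) t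
  end.

Definition vertices (R : realType) (S : finType) (B : {ffun S -> R} -> Prop)
    (b : {ffun S -> R}) : Prop :=
  B b /\
  ~ (exists (k : nat) (w : 'I_k -> R) (x : 'I_k -> {ffun S -> R}),
        (forall i, 0 <= w i) /\ \sum_i w i = 1 /\
        (forall i, B (x i) /\ x i <> b) /\
        (forall s, b s = \sum_i w i * x i s)).

Definition card_is (T : eqType) (P : T -> Prop) (n : nat) : Prop :=
  exists l : seq T, uniq l /\ size l = n /\ (forall x, P x <-> x \in l).

From HB Require Import structures.
From mathcomp Require Import all_boot all_order all_algebra reals boolp.
From mathcomp Require Import ring lra.
Set Implicit Arguments. Unset Strict Implicit. Unset Printing Implicit Defensive.
Import Order.TTheory GRing.Theory Num.Theory.
Local Open Scope ring_scope.

(** The MDP has n components, each made of two states [i_true] and [i_false],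
    plus an unreachable sink.  Every action [a] moves component [i] to [i_a],
    the initial distribution is uniform on the states [i_true], and a single
    observation is emitted everywhere.  A scheduler moving out of component [i]
    to [i_true] with probability [q_i] produces the belief giving mass [q_i/n]
    to [i_true] and [(1-q_i)/n] to [i_false], so from the second observation on
    the belief set is an affine copy of the cube [[0,1]^n], and it stays so.
    Its vertices are the [2^n] points with [q] in [{0,1}^n]: a point with a
    fractional coordinate is a convex combination of the two points obtained by
    rounding that coordinate to 0 and to 1, while 0 and 1 are extreme in
    [[0,1]]. *)

Lemma big_option (R : nmodType) (T : finType) (F : option T -> R) :
  \sum_(s : option T) F s = F None + \sum_t F (Some t).
Proof.
rewrite (bigD1 None) //=; congr (_ + _).
rewrite (reindex_omap Some (fun x => x)) //=; last by case.
by apply: eq_bigl => t; rewrite eqxx.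
Qed.

Section Distributions.
Variable R : realType.

Definition dirac (T : finType) (t : T) : {ffun T -> R} := [ffun s => (s == t)%:R].

Definition bernoulli (r : R) : {ffun bool -> R} := [ffun a => if a then r else 1 - r].

Lemma sum_dirac (T : finType) (t : T) : \sum_s dirac t s = 1.
Proof.
rewrite (bigD1 t) //= big1 ?ffunE ?eqxx ?addr0 // => s /negbTE.
by rewrite ffunE => ->.
Qed.

Lemma dirac_distr (T : finType) (t : T) : is_distr (dirac t).
Proof. by split; [move=> s; rewrite ffunE ler0n | exact: sum_dirac]. Qed.

Lemma bernoulli_distr r : 0 <= r <= 1 -> is_distr (bernoulli r).
Proof.
move=> /andP[r0 r1]; split; last by rewrite big_bool !ffunE /=; ring.
by move=> [|]; rewrite ffunE // subr_ge0.
Qed.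

End Distributions.

Arguments dirac {R T}.

Lemma convex_comb_extreme01 (R : realDomainType) (I : finType) (w y : I -> R)
    (c : bool) :
  (forall i, 0 <= w i) -> \sum_i w i = 1 -> (forall i, 0 <= y i <= 1) ->
  \sum_i w i * y i = c%:R -> forall i, 0 < w i -> y i = c%:R.
Proof.
move=> w_ge0 w_sum1 y01 wy i wi_gt0.
pose d j := if c then 1 - y j else y j.
have wd_ge0 j : 0 <= w j * d j.
  by apply: mulr_ge0 => //; rewrite /d; have /andP[] := y01 j; case: (c); lra.
have wd_sum0 : \sum_j w j * d j = 0.
  rewrite /d; case: c {wd_ge0 d} wy => /= wy //.
  under eq_bigr do rewrite mulrBr mulr1.
  by rewrite sumrB w_sum1 wy subrr.
have /eqP := psumr_eq0P (fun j _ => wd_ge0 j) wd_sum0 (i := i) isT.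
by rewrite mulf_eq0 gt_eqF //= /d; case: c {wy d wd_ge0 wd_sum0} => /eqP /=; lra.
Qed.

Lemma convex2_not_vertex (R : realType) (S : finType) (B : {ffun S -> R} -> Prop)
    (b x1 x2 : {ffun S -> R}) (l : R) :
  0 <= l <= 1 -> B x1 -> B x2 -> x1 <> b -> x2 <> b ->
  (forall s, b s = l * x1 s + (1 - l) * x2 s) -> ~ vertices B b.
Proof.
move=> /andP[l0 l1] Bx1 Bx2 x1b x2b bE [_]; apply.
exists 2, (fun t : 'I_2 => if t == ord0 then l else 1 - l),
  (fun t : 'I_2 => if t == ord0 then x1 else x2).
split; first by move=> t; case: ifP => _; lra.
split; first by rewrite !big_ord_recl big_ord0 /=; ring.
split; first by move=> t; case: ifP.
by move=> s; rewrite !big_ord_recl big_ord0 /= addr0 bE.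
Qed.

Section EstimatorInvariance.
Variables (R : realType) (M : mdp R) (C : {ffun mdp_S M -> R} -> Prop).
Hypothesis est_up_C : forall b z b', C b -> est_up b z b' <-> C b'.

Lemma est_up_image (B : {ffun mdp_S M -> R} -> Prop) z :
  (exists b, B b) -> (forall b, B b -> C b) ->
  (fun b' => exists b, B b /\ est_up b z b') = C.
Proof.
move=> [b0 Bb0] BC; apply/funext => b'; apply/propext; split.
  by case=> b [/BC Cb /(est_up_C _ _ Cb)].
by move=> Cb'; exists b0; split => //; apply/(est_up_C _ _ (BC _ Bb0)).
Qed.

Lemma est_aux_invariant t : (exists b, C b) -> est_aux C t = C.
Proof. by move=> C0; elim: t => //= z t; rewrite est_up_image. Qed.

Lemma est_invariant z0 z1 t : C (est_init z0) -> est [:: z0, z1 & t] = C.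
Proof.
move=> C_init /=; rewrite est_up_image; last by move=> b ->.
- by apply: est_aux_invariant; exists (est_init z0).
- by exists (est_init z0).
Qed.

End EstimatorInvariance.

Section CubeMDP.
Variables (R : realType) (n : nat).
Hypothesis n_gt0 : (0 < n)%N.

Local Notation state := (option ('I_n * bool)).

Lemma big_state (F : state -> R) :
  \sum_s F s = F None + \sum_(i < n) (F (Some (i, true)) + F (Some (i, false))).
Proof.
rewrite big_option; congr (_ + _).
transitivity (\sum_(i < n) \sum_(c : bool) F (Some (i, c))).
  by rewrite pair_big; apply: eq_bigr => -[].
by apply: eq_bigr => i _; rewrite big_bool.
Qed.

Definition cube_belief (p : 'I_n -> R) : {ffun state -> R} :=
  [ffun s => if s is Some (i, c) then (if c then p i else 1 - p i) / n%:R else 0].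

Definition cube_move (s : state) (a : bool) : state :=
  if s is Some (i, _) then Some (i, a) else None.

Definition cube_mdp : mdp R :=
  @Mdp R state bool unit (cube_belief (fun _ => 1))
    (fun s a => Some (dirac (cube_move s a))) (fun _ => dirac tt).

Definition cube (b : {ffun state -> R}) : Prop :=
  exists2 p, (forall i, 0 <= p i <= 1) & b = cube_belief p.

Definition cube_coord (b : {ffun state -> R}) (i : 'I_n) : R :=
  n%:R * b (Some (i, true)).

Lemma cube_coord_belief p i : cube_coord (cube_belief p) i = p i.
Proof. by rewrite /cube_coord ffunE mulrC divfK // pnatr_eq0 -lt0n. Qed.

Lemma eq_cube_belief p q : p =1 q -> cube_belief p = cube_belief q.
Proof. by move=> pq; apply/ffunP => -[[i c]|]; rewrite !ffunE ?pq. Qed.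

Lemma cube_belief_inj p q : cube_belief p = cube_belief q -> p =1 q.
Proof. by move=> pq i; rewrite -(cube_coord_belief p) -(cube_coord_belief q) pq. Qed.

Lemma cube_coordK b : cube b -> b = cube_belief (cube_coord b).
Proof. by case=> p _ ->; apply: eq_cube_belief => i; rewrite cube_coord_belief. Qed.

Lemma cube_coord01 b : cube b -> forall i, 0 <= cube_coord b i <= 1.
Proof. by case=> p p01 -> i; rewrite cube_coord_belief. Qed.

Lemma sum_cube_belief p : \sum_s cube_belief p s = 1.
Proof.
rewrite big_state ffunE add0r.
under eq_bigr do rewrite !ffunE -mulrDl addrC subrK mul1r.
by rewrite sumr_const card_ord -[_ *+ n]mulr_natr mulVf // pnatr_eq0 -lt0n.
Qed.

Lemma cube_belief_distr p : (forall i, 0 <= p i <= 1) -> is_distr (cube_belief p).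
Proof.
move=> p01; split; last exact: sum_cube_belief.
move=> [[i c]|]; rewrite ffunE // divr_ge0 //.
by have /andP[] := p01 i; case: c; lra.
Qed.

Lemma Ptr_cube s a s' : Ptr (M := cube_mdp) s a s' = (s' == cube_move s a)%:R.
Proof. by rewrite /Ptr /= ffunE. Qed.

Lemma obs_cube s : @mdp_obs R cube_mdp s tt = 1.
Proof. by rewrite /= ffunE. Qed.

Lemma sum_Ptr_cube s a :
  \sum_sh Ptr (M := cube_mdp) s a sh * @mdp_obs R cube_mdp sh tt = 1.
Proof.
rewrite -(sum_dirac R (cube_move s a)); apply: eq_bigr => sh _.
by rewrite Ptr_cube obs_cube mulr1 ffunE.
Qed.

Definition cube_step (p : 'I_n -> R) (vs : state -> {ffun bool -> R}) (i : 'I_n) : R :=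
  p i * vs (Some (i, true)) true + (1 - p i) * vs (Some (i, false)) true.

Lemma sum_act_cube (vs : state -> {ffun bool -> R}) i d j c :
  \sum_a vs (Some (i, d)) a * Ptr (M := cube_mdp) (Some (i, d)) a (Some (j, c)) *
          @mdp_obs R cube_mdp (Some (j, c)) tt
  = if i == j then vs (Some (i, d)) c else 0.
Proof.
rewrite big_bool !Ptr_cube obs_cube /= !(inj_eq (@Some_inj _)) !xpair_eqE (eq_sym j).
by case: (i == j); case: c; rewrite /= ?mulr1 ?mulr0 ?addr0 ?add0r.
Qed.

Lemma cube_update p (vs : state -> {ffun bool -> R}) :
  is_local_sched (M := cube_mdp) vs ->
  [ffun s' : state =>
    (\sum_s cube_belief p s * \sum_a vs s a * Ptr (M := cube_mdp) s a s' *
       @mdp_obs R cube_mdp s' tt) /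
    (\sum_s cube_belief p s * \sum_a vs s a *
       \sum_sh Ptr (M := cube_mdp) s a sh * @mdp_obs R cube_mdp sh tt)]
  = cube_belief (cube_step p vs).
Proof.
move=> vs_local.
have vs_sum1 s : \sum_a vs s a = 1 by have [[_ ->]] := vs_local s.
have vs_false s : vs s false = 1 - vs s true.
  by have := vs_sum1 s; rewrite big_bool /=; lra.
have -> : \sum_s cube_belief p s * \sum_a vs s a *
            \sum_sh Ptr (M := cube_mdp) s a sh * @mdp_obs R cube_mdp sh tt = 1.
  rewrite -(sum_cube_belief p); apply: eq_bigr => s _.
  under eq_bigr do rewrite sum_Ptr_cube mulr1.
  by rewrite vs_sum1 mulr1.
apply/ffunP => -[[j c]|]; rewrite [LHS]ffunE divr1 [RHS]ffunE; last first.
  apply: big1 => -[[i d]|] _; last by rewrite ffunE mul0r.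
  by rewrite big1 ?mulr0 // => a _; rewrite Ptr_cube mulr0 mul0r.
rewrite big_state ffunE mul0r add0r; under eq_bigr do rewrite !sum_act_cube.
rewrite (bigD1 j) //= eqxx big1 ?addr0 => [|i /negbTE ->]; last by rewrite !mulr0 addr0.
by rewrite !ffunE /cube_step; case: c; rewrite ?vs_false; ring.
Qed.

Definition cube_sched (q : 'I_n -> R) (s : state) : {ffun bool -> R} :=
  bernoulli (if s is Some (i, _) then q i else 1).

Lemma cube_sched_local q : (forall i, 0 <= q i <= 1) ->
  is_local_sched (M := cube_mdp) (cube_sched q).
Proof.
move=> q01 s; split=> [|a _]; last by [].
by apply: bernoulli_distr; case: s => [[i _]|]; rewrite ?q01 ?lexx ?ler01.
Qed.

Lemma cube_step_sched p q : cube_step p (cube_sched q) =1 q.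
Proof. by move=> i; rewrite /cube_step !ffunE; ring. Qed.

Lemma cube_step01 p (vs : state -> {ffun bool -> R}) :
  (forall i, 0 <= p i <= 1) -> is_local_sched (M := cube_mdp) vs ->
  forall i, 0 <= cube_step p vs i <= 1.
Proof.
move=> p01 vs_local i; rewrite /cube_step.
have vs01 s a : 0 <= vs s a <= 1.
  have [[vs_ge0 vs_sum1] _] := vs_local s; move: vs_sum1; rewrite big_bool.
  by have := vs_ge0 true; have := vs_ge0 false; case: a; rewrite /=; lra.
have /andP[p0 p1] := p01 i.
have /andP[u0 u1] := vs01 (Some (i, true)) true.
have /andP[v0 v1] := vs01 (Some (i, false)) true.
by apply/andP; split; nra.
Qed.

Lemma est_up_cube b z b' : cube b -> est_up (M := cube_mdp) b z b' <-> cube b'.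
Proof.
case: z => -[p p01 ->]; split.
  case=> vs [vs_local ->]; rewrite cube_update //.
  by exists (cube_step p vs) => //; exact: cube_step01.
case=> q q01 ->; exists (cube_sched q); split; first exact: cube_sched_local.
rewrite cube_update; last exact: cube_sched_local.
by apply: eq_cube_belief => i; rewrite cube_step_sched.
Qed.

Definition cube_vertex (v : {ffun 'I_n -> bool}) : {ffun state -> R} :=
  cube_belief (fun i => (v i)%:R).

Lemma cube_vertex_inj : injective cube_vertex.
Proof.
move=> v1 v2 /cube_belief_inj v12; apply/ffunP => i.
by move: (v12 i) => /eqP; rewrite eqr_nat; case: (v1 i); case: (v2 i).
Qed.

Lemma cube_vertexP b : vertices cube b <-> exists v, b = cube_vertex v.
Proof.
split=> [b_vert | [v ->]].
  have [y y01 bE] := b_vert.1.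
  have [y_bool | /forallPn[i]] := boolP [forall i, (y i == 0) || (y i == 1)].
    exists [ffun i => y i == 1]; rewrite bE; apply: eq_cube_belief => i.
    rewrite ffunE; case/orP: (forallP y_bool i) => /eqP ->; rewrite ?eqxx //.
    by rewrite eq_sym oner_eq0.
  rewrite negb_or => /andP[/eqP yi_neq0 /eqP yi_neq1]; exfalso.
  pose round (r : R) j := if j == i then r else y j.
  have round01 r : 0 <= r <= 1 -> cube (cube_belief (round r)).
    by move=> r01; exists (round r) => // j; rewrite /round; case: ifP.
  have round_neq r : r != y i -> cube_belief (round r) <> b.
    by move=> /eqP ri; rewrite bE => /cube_belief_inj/(_ i); rewrite /round eqxx.
  apply: (convex2_not_vertex (y01 i) (round01 1 _) (round01 0 _)) b_vert.
  - by rewrite lexx ler01.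
  - by rewrite lexx ler01.
  - by apply: round_neq; apply/eqP => /esym.
  - by apply: round_neq; apply/eqP => /esym.
  move=> [[j c]|]; rewrite bE !ffunE /round ?mulr0 ?addr0 //.
  by case: eqVneq => [->|_]; case: c; ring.
split.
  by exists (fun i => (v i)%:R) => // i; case: (v i); rewrite ?lexx ?ler01.
case=> k [w [x [w_ge0 [w_sum1 [x_cube bE]]]]].
have [t /andP[_ wt_gt0]] : exists t, true && (0 < w t).
  by apply: psumr_neq0P => [t _|]; rewrite ?w_sum1; [exact: w_ge0 | exact/eqP/oner_neq0].
apply: (x_cube t).2; rewrite (cube_coordK (x_cube t).1).
apply: eq_cube_belief => i.
apply: (convex_comb_extreme01 (y := fun s => cube_coord (x s) i) w_ge0 w_sum1) => //.
  by move=> s; apply: cube_coord01; exact: (x_cube s).1.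
rewrite -(cube_coord_belief (fun i => (v i)%:R) i) /cube_coord bE mulr_sumr.
by apply: eq_bigr => s _; rewrite mulrCA.
Qed.

Lemma card_vertices_cube : card_is (vertices cube) (2 ^ n).
Proof.
exists [seq cube_vertex v | v <- enum {ffun 'I_n -> bool}]; split.
  by rewrite map_inj_uniq ?enum_uniq //; exact: cube_vertex_inj.
split; first by rewrite size_map -cardE card_ffun card_bool card_ord.
move=> b; rewrite cube_vertexP; split=> [[v ->]|/mapP[v _ ->]]; last by exists v.
by apply: map_f; rewrite mem_enum.
Qed.

Lemma cube_mdp_wf : wf_mdp cube_mdp.
Proof.
split; first by apply: cube_belief_distr => i; rewrite lexx ler01.
split; first by move=> s a d [<-]; exact: dirac_distr.
by split=> s; [exact: dirac_distr | exists true].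
Qed.

Lemma card_cube_mdp_state : #|mdp_S cube_mdp| = (2 * n + 1)%N.
Proof. by rewrite /= card_option card_prod card_ord card_bool mulnC addn1. Qed.

Lemma est_init_cube z : est_init (M := cube_mdp) z = cube_belief (fun _ => 1).
Proof.
case: z; apply/ffunP => s; rewrite ffunE obs_cube.
under eq_bigr do rewrite mulr1.
by rewrite sum_cube_belief mulr1 divr1.
Qed.

Lemma est_cube_mdp tau : (1 < size tau)%N -> est (M := cube_mdp) tau = cube.
Proof.
case: tau => [|z0 [|z1 t]] // _; apply: est_invariant; first exact: est_up_cube.
by rewrite est_init_cube; exists (fun _ => 1) => // i; rewrite lexx ler01.
Qed.

End CubeMDP.

Theorem lemma6 (R : realType) :
  exists M : nat -> mdp R, forall n : nat, (0 < n)%N ->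
    wf_mdp (M n) /\ #|mdp_S (M n)| = (2 * n + 1)%N /\
    forall tau : seq (mdp_Z (M n)), (2 < size tau)%N ->
      (exists sigma : scheduler (M n), is_sched sigma /\ 0 < Pr_trace sigma tau) ->
      card_is (vertices (est tau)) (2 ^ n).
Proof.
exists (cube_mdp R) => n n_gt0; split; first exact: cube_mdp_wf.
split; first exact: card_cube_mdp_state.
(* With a single observation the belief set is the same for every trace of
   length at least 2. *)
move=> tau tau_gt2 _; rewrite est_cube_mdp //; last exact: ltnW.
exact: card_vertices_cube.
Qed.
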